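(* Let $1\le m\le k-1$, $K=\{1,\dots,k\}$, $T\subseteq K$ with $|T|=m$, and let $\mathcal{V}=\{\bm v_1,\dots,\bm v_{m-1}\}$ be $m-1$ distinct points of $PG(k-1,q)$ with $\mathrm{supp}(\bm v_i)\cap T=\emptyset$ for all $i$. If $m\le q^{k-m-1}$, then $M=X^T\cup Y^T_{\mathcal V}\cup Z^T$ is a minimal $(k-m)$-block over $\mathbb{F}_q$.
   Context: Points of $PG(k-1,q)$ are one-dimensional subspaces of $\mathbb{F}_q^k$, identified with any nonzero representing vector; the support $\mathrm{supp}(\bm x)=\{i:x_i\neq0\}$ of a point is well defined. $\bm e_i$ denotes the $i$-th standard unit vector of $\mathbb{F}_q^k$. Define $X^T=\{\bm x\in PG(k-1,q): \mathrm{supp}(\bm x)\cap T=\emptyset\}$; $Y^T_{\mathcal V}=\{\bm x\in PG(k-1,q): |\mathrm{supp}(\bm x)\cap T|=1\}$ minus all points represented by $\bm v_i+\lambda\bm e_j$ with $\bm v_i\in\mathcal V$, $j\in T$, $\lambda\in\mathbb{F}_q\setminus\{0\}$; $Z^T=\{\bm x\in PG(k-1,q): \mathrm{supp}(\bm x)\text{ is a 2-element subset of }T\}$. For $1\le r\le k-1$, a set $M$ of points of $PG(k-1,q)$ is an $r$-block if every $(k-r)$-dimensional linear subspace of $\mathbb{F}_q^k$ contains at least one point of $M$. A tangent of a point $\bm x\in M$ is a $(k-r)$-dimensional linear subspace $U$ of $\mathbb{F}_q^k$ whose set of points meets $M$ exactly in $\{\bm x\}$. An $r$-block $M$ is minimal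 if every point of $M$ has a tangent. *)

From HB Require Import structures.
From mathcomp Require Import all_boot all_order all_algebra all_fingroup all_field.
Set Implicit Arguments. Unset Strict Implicit. Unset Printing Implicit Defensive.
Import GRing.Theory.
Local Open Scope ring_scope.

(* Points of PG(k-1,q), q = #|F|: one-dimensional subspaces of F^k, represented
   canonically (via genmx) as square matrices whose row space is the line. *)
Section PG.
Variables (F : finFieldType) (k : nat).

Definition pt_of (v : 'rV[F]_k) : 'M[F]_k := (<<v>>)%MS.

Definition PG : {set 'M[F]_k} := [set pt_of v | v in [pred v : 'rV[F]_k | v != 0]].

Definition supp (v : 'rV[F]_k) : {set 'I_k} := [set i | v 0 i != 0].

Definition e_ (j : 'I_k) : 'rV[F]_k := delta_mx 0 j.

Definition X_T (T : {set 'I_k}) : {set 'M[F]_k} :=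
  [set pt_of v | v in [pred v : 'rV[F]_k | (v != 0) && [disjoint supp v & T]]].

(* V given by representing vectors vs *)
Definition Y_T (T : {set 'I_k}) (vs : seq 'rV[F]_k) : {set 'M[F]_k} :=
  [set pt_of v | v in [pred v : 'rV[F]_k | (v != 0) && (#|supp v :&: T| == 1)%N]]
  :\: [set P in PG | [exists v in [pred v | v \in vs], exists j in T,
          exists l : F, (l != 0) && (P == pt_of (v + l *: e_ j))]].

Definition Z_T (T : {set 'I_k}) : {set 'M[F]_k} :=
  [set pt_of v | v in [pred v : 'rV[F]_k |
      (v != 0) && (supp v \subset T) && (#|supp v| == 2)%N]].

Definition pts_in (U : 'M[F]_k) : {set 'M[F]_k} := [set P in PG | (P <= U)%MS].

Definition is_block (r : nat) (M : {set 'M[F]_k}) : Prop :=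
  forall U : 'M[F]_k, \rank U = (k - r)%N -> exists2 P, P \in M & (P <= U)%MS.

Definition is_tangent (r : nat) (M : {set 'M[F]_k}) (x U : 'M[F]_k) : Prop :=
  \rank U = (k - r)%N /\ pts_in U :&: M = [set x].

Definition is_minimal_block (r : nat) (M : {set 'M[F]_k}) : Prop :=
  M \subset PG /\ is_block r M /\
  forall x, x \in M -> exists U : 'M[F]_k, is_tangent r M x U.

End PG.

From HB Require Import structures.
From mathcomp Require Import all_boot all_order all_algebra all_fingroup all_field.
From mathcomp Require Import ring.
Set Implicit Arguments. Unset Strict Implicit. Unset Printing Implicit Defensive.
Import GRing.Theory.
Local Open Scope ring_scope.

(* Let [U] have dimension [m = #|T|]. If its restriction to the coordinates in [T] is
   not injective, [U] contains a vector vanishing on [T], a point of [X_T]. Otherwise, for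
   every [j] in [T], [U] contains a vector equal to [e_j] on [T]; its point is in [Y_T]
   unless it lies on a line [v + l e_j] with [v] in [vs]. As [vs] has only [m - 1]
   elements, two indices [j], [j'] share the same [v], and a combination of the two
   vectors is the point [c' e_j - c e_j'] of [Z_T].
   Each point of [M] has as tangent the span of [m] rows that restrict to unit vectors on
   [m] coordinates. For points of [Y_T] and [Z_T] the rows are [e_i] plus multiples of the
   vectors of [vs]; another point of [M] in their span would make two distinct points of
   [vs] proportional, or the given point excluded. For a point [y] of [X_T] the rows are
   [y] and differences of rows [G i + e_i] with distinct [G i]; another point of [M]
   would force two [G i] to coincide. *)

Lemma pigeonhole_rel (I : finType) (A : {set I}) n (R : I -> 'I_n -> bool) :
  (forall j, j \in A -> exists i, R j i) -> (n < #|A|)%N ->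
  exists j j' i, [/\ j \in A, j' \in A, j != j', R j i & R j' i].
Proof.
move=> exR ltnA; have [j0 j0A] : exists j0, j0 \in A.
  by apply/set0Pn; rewrite -card_gt0 (leq_ltn_trans _ ltnA).
have [i0 _] := exR j0 j0A.
pose g j := odflt i0 [pick i | R j i].
have gR : {in A, forall j, R j (g j)}.
  by move=> j /exR [i Ri]; rewrite /g; case: pickP => [//|/(_ i)]; rewrite Ri.
have : ~~ dinjectiveb g A.
  by apply/negP => /dinjectiveP/leq_card_in; rewrite card_ord leqNgt ltnA.
case/dinjectivePn => j jA [j' /andP [j'j j'A] gjj'].
exists j, j', (g j); split; rewrite 1?eq_sym //; first exact: gR.
by rewrite gjj'; apply: gR.
Qed.

Lemma uniq_map_inj_in (T1 T2 : eqType) (f : T1 -> T2) (s : seq T1) :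
  uniq (map f s) -> {in s &, injective f}.
Proof.
elim: s => //= a s IH /andP [fa fu] x y; rewrite !inE.
case/orP=> [/eqP -> | xs] /orP [/eqP -> | ys] // fxy.
- by move: fa; rewrite fxy map_f.
- by move: fa; rewrite -fxy map_f.
- exact: IH.
Qed.

Lemma lincomb_eq0 (R : fieldType) (V : lmodType R) (a b : V) (x y : R) :
  x != 0 -> x *: a + y *: b = 0 -> a = (- (y / x)) *: b.
Proof.
move=> x0 /eqP; rewrite addr_eq0 => /eqP xa.
by rewrite -[a]scale1r -(mulVf x0) -scalerA xa scalerN scalerA scaleNr mulrC.
Qed.

Section Points.
Variables (F : finFieldType) (k : nat).
Implicit Types (v w y : 'rV[F]_k) (T : {set 'I_k}).

Lemma pt_of_eq_scale v w : pt_of v = pt_of w -> exists c, v = c *: w.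
Proof. by move/genmxP/andP => [/sub_rVP]. Qed.

Lemma pt_of_eq_scaleN v w : v != 0 -> pt_of v = pt_of w ->
  exists2 c, c != 0 & v = c *: w.
Proof.
move=> v0 /pt_of_eq_scale [c vc]; exists c => //.
by apply: contraNneq v0 => c0; rewrite vc c0 scale0r.
Qed.

Lemma pt_ofZ c w : c != 0 -> pt_of (c *: w) = pt_of w.
Proof. by move=> c0; apply/genmxP/eqmxP; apply: eqmx_scale. Qed.

Lemma suppZ c w : c != 0 -> supp (c *: w) = supp w.
Proof. by move=> c0; apply/setP=> i; rewrite !inE mxE mulf_eq0 negb_or c0. Qed.

Lemma sub_pt_of w n (U : 'M[F]_(n, k)) : (pt_of w <= U)%MS = (w <= U)%MS.
Proof. by rewrite /pt_of genmxE. Qed.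

Lemma mem_PG v : v != 0 -> pt_of v \in PG F k.
Proof. by move=> v0; apply/imsetP; exists v. Qed.

Lemma PGP P : P \in PG F k -> exists2 v, v != 0 & P = pt_of v.
Proof. by case/imsetP=> v /= v0 ->; exists v. Qed.

Lemma supp0 w i : i \notin supp w -> w 0 i = 0.
Proof. by rewrite inE negbK => /eqP. Qed.

Lemma suppN0 w i : i \in supp w -> w 0 i != 0.
Proof. by rewrite inE. Qed.

Lemma disjoint_supp0 w T i : [disjoint supp w & T] -> i \in T -> w 0 i = 0.
Proof. by rewrite disjoint_sym => /disjointFr dw /dw /negbT /supp0. Qed.

Lemma supp_pair w p q : p != q -> supp w = [set p; q] ->
  w = w 0 p *: e_ F p + w 0 q *: e_ F q.
Proof.
move=> pq sw; apply/rowP => j; rewrite !mxE !eqxx /=.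
have [->|njp] := eqVneq j p; first by rewrite (negbTE pq) /=; ring.
have [->|njq] := eqVneq j q; first by rewrite /=; ring.
by rewrite /= !mulr0 addr0 supp0 // sw !inE negb_or njp njq.
Qed.

Lemma mem_X_T T w : w != 0 -> (pt_of w \in X_T F T) = [disjoint supp w & T].
Proof.
move=> w0; apply/imsetP/idP => [[v /= /andP [v0 dv] /(pt_of_eq_scaleN w0) [c c0 ->]]|dw].
  by rewrite suppZ.
by exists w => //; rewrite inE w0.
Qed.

Lemma mem_Z_T T w : w != 0 ->
  (pt_of w \in Z_T F T) = (supp w \subset T) && (#|supp w| == 2)%N.
Proof.
move=> w0; apply/imsetP/idP => [[v /= /andP [/andP [v0 vT] v2]]|dw].
  by case/(pt_of_eq_scaleN w0) => c c0 ->; rewrite suppZ // vT.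
by exists w => //; rewrite inE w0.
Qed.

Definition excluded T (vs : seq 'rV[F]_k) (P : 'M[F]_k) :=
  [exists v in [pred v | v \in vs], exists j in T,
          exists l : F, (l != 0) && (P == pt_of (v + l *: e_ F j))].

Lemma mem_Y_T T vs w : w != 0 ->
  (pt_of w \in Y_T T vs) = (#|supp w :&: T| == 1)%N && ~~ excluded T vs (pt_of w).
Proof.
move=> w0; rewrite !inE mem_PG //= andbC; congr (_ && _).
apply/imsetP/idP => [[v /= /andP [v0 v1] /(pt_of_eq_scaleN w0) [c c0 ->]]|dw].
  by rewrite suppZ.
by exists w => //; rewrite inE w0.
Qed.

Lemma excludedI T vs v j l : v \in vs -> j \in T -> l != 0 ->
  excluded T vs (pt_of (v + l *: e_ F j)).
Proof.
move=> vv jT l0; apply/existsP; exists v; rewrite inE vv /=.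
by apply/existsP; exists j; rewrite jT; apply/existsP; exists l; rewrite l0 eqxx.
Qed.

Lemma excludedP T vs P : excluded T vs P ->
  exists v j l, [/\ v \in vs, j \in T, l != 0 & P = pt_of (v + l *: e_ F j)].
Proof.
case/existsP=> v /andP [vv /existsP [j /andP [jT /existsP [l /andP [l0 /eqP E]]]]].
by exists v, j, l.
Qed.

Lemma supp_e2 (a b : F) (p q : 'I_k) : p != q -> a != 0 -> b != 0 ->
  supp (a *: e_ F p + b *: e_ F q) = [set p; q].
Proof.
move=> pq a0 b0; apply/setP => t; rewrite !inE !mxE eqxx /=.
have [->|tp] := eqVneq t p; first by rewrite (negbTE pq) mulr1 mulr0 addr0.
have [_|tq] := eqVneq t q; first by rewrite mulr1 mulr0 add0r orbT.
by rewrite !mulr0 addr0 eqxx.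
Qed.

Lemma excluded_scale_e T vs c v j : c != 0 -> v \in vs -> j \in T ->
  excluded T vs (pt_of (c *: v + e_ F j)).
Proof.
move=> c0 vv jT; rewrite -(pt_ofZ _ (invr_neq0 c0)) scalerDr scalerA mulVf // scale1r.
exact: excludedI (invr_neq0 c0).
Qed.

Lemma pt_of_pair_eq w y p q : p != q -> supp w = [set p; q] -> supp y = [set p; q] ->
  w 0 p * y 0 q = w 0 q * y 0 p -> pt_of w = pt_of y.
Proof.
move=> pq sw sy wy; have yp0 : y 0 p != 0 by apply: suppN0; rewrite sy !inE eqxx.
have wp0 : w 0 p != 0 by apply: suppN0; rewrite sw !inE eqxx.
rewrite -(pt_ofZ y (mulf_neq0 wp0 (invr_neq0 yp0))); congr pt_of.
rewrite [LHS](supp_pair pq sw) [in X in _ = _ *: X](supp_pair pq sy) scalerDr !scalerA.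
by rewrite divfK // mulrAC wy mulfK.
Qed.

Lemma tangent_of_point (M : {set 'M[F]_k}) (U : 'M[F]_k) y :
    y != 0 -> (y <= U)%MS -> pt_of y \in M ->
    (forall w, w != 0 -> (w <= U)%MS -> pt_of w \in M -> pt_of w = pt_of y) ->
  pts_in U :&: M = [set pt_of y].
Proof.
move=> y0 yU yM onlyy; apply/setP => P; rewrite !inE.
apply/idP/eqP => [/andP [/andP [/PGP [w w0 ->] wU] wM] | ->].
  by apply: onlyy; rewrite -?sub_pt_of.
by rewrite mem_PG // sub_pt_of yU.
Qed.

Lemma XYZ_sub_PG T vs : X_T F T :|: Y_T T vs :|: Z_T F T \subset PG F k.
Proof.
apply/subsetP => P; rewrite !in_setU => /orP [/orP [] | ].
- by case/imsetP => v /andP [v0 _] ->; apply: mem_PG.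
- by case/setDP => /imsetP [v /andP [v0 _] ->] _; apply: mem_PG.
- by case/imsetP => v /andP [/andP [v0 _] _] ->; apply: mem_PG.
Qed.

End Points.

Section Restriction.
Variables (F : finFieldType) (k : nat).

Definition restr (D : {set 'I_k}) : 'M[F]_(k, #|D|) := colsub enum_val 1%:M.

Lemma restr_coord D (w : 'rV[F]_k) l : (w *m restr D) 0 l = w 0 (enum_val l).
Proof. by rewrite mulmx_colsub mulmx1 mxE. Qed.

Lemma exists_disjoint_supp n D (U : 'M[F]_(n, k)) :
  (\rank (U *m restr D) < \rank U)%N ->
  exists2 w, w != 0 & (w <= U)%MS /\ [disjoint supp w & D].
Proof.
move=> lt; have : (U :&: kermx (restr D))%MS != 0.
  rewrite -mxrank_eq0; apply: contraTneq lt => K0.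
  by rewrite -(mxrank_mul_ker U (restr D)) K0 addn0 ltnn.
case/rowV0Pn => w; rewrite sub_capmx => /andP [wU /sub_kermxP wD] w0.
exists w => //; split => //; rewrite -setI_eq0; apply/eqP/setP => t; rewrite !inE.
apply/negP => /andP [wt tD]; move/rowP: wD => /(_ (enum_rank_in tD t)).
by rewrite restr_coord enum_rankK_in // mxE; apply/eqP.
Qed.

Lemma exists_unit_on n D (U : 'M[F]_(n, k)) j : row_full (U *m restr D) -> j \in D ->
  exists2 z : 'rV[F]_k, (z <= U)%MS & forall t, t \in D -> z 0 t = (t == j)%:R.
Proof.
move=> full jD; pose d := delta_mx 0 (enum_rank_in jD j) : 'rV[F]_#|D|.
have /submxP [u du] : (d <= U *m restr D)%MS by apply: submx_full.
exists (u *m U) => [|t tD]; first exact: submxMl.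
move/rowP: du => /(_ (enum_rank_in jD t)).
rewrite mulmxA restr_coord enum_rankK_in // mxE eqxx => <-.
by rewrite (can_in_eq (enum_rankK_in jD)).
Qed.

End Restriction.

Section Block.
Variables (F : finFieldType) (k : nat) (T : {set 'I_k}) (vs : seq 'rV[F]_k).
Hypothesis vsT : forall v, v \in vs -> [disjoint supp v & T].
Local Notation M := (X_T F T :|: Y_T T vs :|: Z_T F T).

Section AvoidingSubspace.
Variable U : 'M[F]_k.
Hypothesis U_avoids_M : forall w, w != 0 -> (w <= U)%MS -> pt_of w \notin M.

(* As [U] avoids [M], the point of [z] is excluded from [Y_T]: it lies on a line [v + l e_j]. *)
Lemma unit_on_T_excluded j (z : 'rV[F]_k) : j \in T -> (z <= U)%MS ->
    (forall t, t \in T -> z 0 t = (t == j)%:R) ->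
  exists i : 'I_(size vs), [exists c : F, (c != 0) && ((c *: nth 0 vs i + e_ F j)%R <= U)%MS].
Proof.
move=> jT zU zT; have zj : z 0 j = 1 by rewrite zT ?eqxx.
have z0 : z != 0 by apply: contra_eq_neq zj => ->; rewrite mxE eq_sym oner_eq0.
have szT : supp z :&: T = [set j].
  apply/setP => t; rewrite !inE; case tT: (t \in T); rewrite ?andbF ?andbT.
    by rewrite zT //; case: (t == j); rewrite /= ?mulr1n ?oner_eq0 ?eqxx.
  by case: eqP => // tj; rewrite -tj tT in jT.
have : pt_of z \notin Y_T T vs.
  by apply: contra (U_avoids_M z0 zU); rewrite !in_setU => ->; rewrite orbT.
rewrite mem_Y_T // szT cards1 /= negbK.
case/excludedP=> v [j' [l [vvs j'T l0 /pt_of_eq_scale [d zE]]]].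
have vT t : t \in T -> v 0 t = 0 by apply: disjoint_supp0; apply: vsT.
have := zj; rewrite zE !mxE vT // add0r eqxx /=.
case: (eqVneq j j') => [jj' | _]; last by rewrite !mulr0 => /esym/eqP; rewrite oner_eq0.
subst j'; rewrite mulr1 => dl.
have iv : (index v vs < size vs)%N by rewrite index_mem.
exists (Ordinal iv).
apply/existsP; exists d; rewrite nth_index //; apply/andP; split.
  by apply: contra_eq_neq dl => ->; rewrite mul0r eq_sym oner_eq0.
by move: zU; rewrite zE scalerDr scalerA dl scale1r.
Qed.

Lemma row_full_restr_avoiding : \rank U = #|T| -> row_full (U *m restr F T).
Proof.
move=> rU; have [lt|] := ltnP (\rank (U *m restr F T)) (\rank U).
  have [w w0 [wU dw]] := exists_disjoint_supp lt.
  by have := U_avoids_M w0 wU; rewrite !in_setU mem_X_T // dw.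
by rewrite rU /row_full eqn_leq rank_leq_col.
Qed.

(* Pigeonhole: two indices [j], [j'] sharing a witness [v] give [c' e_j - c e_j'] in [U]. *)
Lemma avoiding_rank_le_size : \rank U = #|T| -> (#|T| <= size vs)%N.
Proof.
move=> rU; rewrite leqNgt; apply/negP => ltT.
have witness j : j \in T -> exists i : 'I_(size vs),
    [exists c : F, (c != 0) && ((c *: nth 0 vs i + e_ F j)%R <= U)%MS].
  move=> jT; have [z zU zT] := exists_unit_on (row_full_restr_avoiding rU) jT.
  exact: unit_on_T_excluded zU zT.
have [j [j' [i [jT j'T jj']]]] := pigeonhole_rel witness ltT.
case/existsP=> c /andP [c0 cU] /existsP [c' /andP [c'0 c'U]].
set v := nth 0 vs i in cU c'U.
have wE : c' *: (c *: v + e_ F j) - c *: (c' *: v + e_ F j') = c' *: e_ F j + (- c) *: e_ F j'.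
  by rewrite !scalerDr !scalerA (mulrC c) opprD addrACA subrr add0r scaleNr.
have sw : supp (c' *: e_ F j + (- c) *: e_ F j') = [set j; j'].
  by rewrite supp_e2 // oppr_eq0.
have w0 : c' *: e_ F j + (- c) *: e_ F j' != 0.
  by apply: contraTneq (setU11 j [set j']) => w0; rewrite -sw w0 inE mxE eqxx.
apply: (negP (U_avoids_M w0 _)).
  by rewrite -wE; apply: addmx_sub; rewrite ?eqmx_opp; apply: scalemx_sub.
rewrite !in_setU mem_Z_T // sw cards2 jj' andbT; apply/orP; right.
by apply/subsetP => t; rewrite !inE => /orP [] /eqP ->.
Qed.

End AvoidingSubspace.

Lemma block_XYZ (U : 'M[F]_k) : (size vs < #|T|)%N -> \rank U = #|T| ->
  exists2 P, P \in M & (P <= U)%MS.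
Proof.
move=> ltT rU; have [/existsP [w /and3P [w0 wU wM]] | noM] :=
  boolP [exists w : 'rV[F]_k, [&& w != 0, (w <= U)%MS & pt_of w \in M]].
  by exists (pt_of w); rewrite ?sub_pt_of.
have U_avoids_M w : w != 0 -> (w <= U)%MS -> pt_of w \notin M.
  by move=> w0 wU; apply: contra noM => wM; apply/existsP; exists w; rewrite w0 wU.
by have := avoiding_rank_le_size U_avoids_M rU; rewrite leqNgt ltT.
Qed.

End Block.

Section SpanRows.
Variables (F : finFieldType) (k : nat) (D : {set 'I_k}) (R : 'I_k -> 'rV[F]_k).

Definition span_rows : 'M[F]_k := <<\matrix_(l < #|D|) R (enum_val l)>>%MS.

Lemma span_rows_sub i : i \in D -> (R i <= span_rows)%MS.
Proof.
move=> iD; rewrite genmxE -(enum_rankK_in iD iD).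
by rewrite -(rowK (fun l => R (enum_val l))) row_sub.
Qed.

Hypothesis R_unit : forall i j, i \in D -> j \in D -> R i 0 j = (i == j)%:R.

Let rows_restr : \matrix_(l < #|D|) R (enum_val l) *m restr F D = 1%:M.
Proof.
apply/matrixP => l l'; rewrite mulmx_colsub mulmx1 !mxE R_unit ?enum_valP //.
by rewrite (inj_eq enum_val_inj).
Qed.

Lemma rank_span_rows : \rank span_rows = #|D|.
Proof.
rewrite mxrank_gen; apply/eqP; rewrite eqn_leq rank_leq_row /=.
by rewrite -{1}(mxrank1 F #|D|) -rows_restr mxrankM_maxl.
Qed.

Lemma span_rowsP w : (w <= span_rows)%MS -> w = \sum_(i in D) w 0 i *: R i.
Proof.
rewrite genmxE => /submxP [u wE].
have uE : u = w *m restr F D by rewrite wE -mulmxA rows_restr mulmx1.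
rewrite big_enum_val {1}wE mulmx_sum_row; apply: eq_bigr => l _.
by rewrite rowK uE restr_coord.
Qed.

End SpanRows.

Lemma big_supp (F : finFieldType) k (V : nmodType) (w : 'rV[F]_k) (D : {set 'I_k})
    (f : 'I_k -> V) : (forall i, w 0 i = 0 -> f i = 0) ->
  \sum_(i in D) f i = \sum_(i in supp w :&: D) f i.
Proof.
move=> f0; rewrite [RHS]big_mkcond [LHS]big_mkcond; apply: eq_bigr => i _.
by rewrite !inE; case: (i \in D); case: eqP => // /f0.
Qed.

Lemma sum_supp (F : finFieldType) k (V : lmodType F) (w : 'rV[F]_k) (D : {set 'I_k})
    (X : 'I_k -> V) :
  \sum_(i in D) w 0 i *: X i = \sum_(i in supp w :&: D) w 0 i *: X i.
Proof. by apply: big_supp => i ->; rewrite scale0r. Qed.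

Section GraphExpansion.
Variables (F : finFieldType) (k : nat) (T : {set 'I_k}) (G : 'I_k -> 'rV[F]_k).
Variable w : 'rV[F]_k.
Hypothesis w_exp : w = \sum_(i in T) w 0 i *: (G i + e_ F i).

Lemma graph_exp_meet : w != 0 -> ~~ [disjoint supp w & T].
Proof.
apply: contra => dw; rewrite -setI_eq0 in dw.
by rewrite w_exp sum_supp (eqP dw) big_set0.
Qed.

Lemma graph_exp_single t : supp w :&: T = [set t] -> w = w 0 t *: (G t + e_ F t).
Proof. by move=> st; rewrite {1}w_exp sum_supp st big_set1. Qed.

Lemma graph_exp_pair p q : p != q -> supp w \subset T -> supp w = [set p; q] ->
  w 0 p *: G p + w 0 q *: G q = 0.
Proof.
move=> pq sT sw; have := w_exp; rewrite sum_supp (setIidPl sT) sw.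
rewrite big_setU1 ?big_set1 ?inE //= !scalerDr addrACA {1}(supp_pair pq sw).
by move/esym/eqP; rewrite -subr_eq0 addrK => /eqP.
Qed.

End GraphExpansion.

Section GraphSpan.
Variables (F : finFieldType) (k : nat) (T : {set 'I_k}) (G : 'I_k -> 'rV[F]_k).

Let graph_row i := G i + e_ F i.

Definition graph_span : 'M[F]_k := span_rows T graph_row.

Hypothesis G_T : forall i j, i \in T -> j \in T -> G i 0 j = 0.

Let graph_unit i j : i \in T -> j \in T -> graph_row i 0 j = (i == j)%:R.
Proof. by move=> iT jT; rewrite !mxE G_T // add0r eqxx eq_sym. Qed.

Lemma rank_graph_span : \rank graph_span = #|T|.
Proof. exact: (rank_span_rows graph_unit). Qed.

Lemma graph_span_sub i : i \in T -> ((G i + e_ F i)%R <= graph_span)%MS.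
Proof. exact: span_rows_sub. Qed.

Lemma graph_spanP w : (w <= graph_span)%MS -> w = \sum_(i in T) w 0 i *: (G i + e_ F i).
Proof. exact: (span_rowsP graph_unit). Qed.

End GraphSpan.

Section Frame.
Variables (F : finFieldType) (k : nat) (T : {set 'I_k}) (vs : seq 'rV[F]_k).
Hypothesis vs0 : forall v, v \in vs -> v != 0.
Hypothesis vs_uniq : uniq (map (@pt_of F k) vs).

Lemma vs_indep u u' x y : u \in vs -> u' \in vs -> u != u' -> x != 0 ->
  x *: u + y *: u' != 0.
Proof.
move=> uvs u'vs uu' x0; apply/eqP => /(lincomb_eq0 x0) uE.
have [y0|y0] := eqVneq y 0; first by move: (vs0 uvs); rewrite uE y0 mul0r oppr0 scale0r eqxx.
move/negP: uu'; apply; apply/eqP/(uniq_map_inj_in vs_uniq) => //.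
by rewrite uE pt_ofZ // oppr_eq0 mulf_neq0 ?invr_eq0.
Qed.

Lemma graph_exp_indep (G : 'I_k -> 'rV[F]_k) (w : 'rV[F]_k) p q c c' v v' :
    w = \sum_(i in T) w 0 i *: (G i + e_ F i) ->
    p != q -> supp w \subset T -> supp w = [set p; q] ->
    G p = c *: v -> G q = c' *: v' -> c != 0 -> v \in vs -> v' \in vs -> v != v' -> False.
Proof.
move=> w_exp pq sT sw Gp Gq c0 vv v'v vv'; have := graph_exp_pair w_exp pq sT sw.
apply/eqP; rewrite Gp Gq !scalerA vs_indep // mulf_neq0 //.
by apply: suppN0; rewrite sw !inE eqxx.
Qed.

Lemma graph_exp_excluded (G : 'I_k -> 'rV[F]_k) (w : 'rV[F]_k) t c v :
    w = \sum_(i in T) w 0 i *: (G i + e_ F i) ->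
    supp w :&: T = [set t] -> G t = c *: v -> c != 0 -> v \in vs ->
  excluded T vs (pt_of w).
Proof.
move=> w_exp st Gt c0 vv; have : t \in supp w :&: T by rewrite st set11.
rewrite inE => /andP [/suppN0 wt0 tT].
by rewrite (graph_exp_single w_exp st) pt_ofZ // Gt excluded_scale_e.
Qed.

Definition vs_at (S : {set 'I_k}) i := nth 0 vs (index i (enum S)).

Variable S : {set 'I_k}.
Hypothesis card_S : #|S| = size vs.

Let index_lt i : i \in S -> (index i (enum S) < size vs)%N.
Proof. by move=> iS; rewrite -card_S cardE index_mem mem_enum. Qed.

Lemma vs_at_mem i : i \in S -> vs_at S i \in vs.
Proof. by move=> iS; rewrite mem_nth ?index_lt. Qed.

Lemma vs_at_inj : {in S &, injective (vs_at S)}.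
Proof.
move=> i j iS jS /eqP; rewrite nth_uniq ?(map_uniq vs_uniq) ?index_lt //.
by move/eqP/(congr1 (nth i (enum S))); rewrite !nth_index ?mem_enum.
Qed.

End Frame.

Lemma exists_inj_rows (F : finFieldType) k (T A : {set 'I_k}) :
  (#|T| <= #|F| ^ #|~: A|)%N -> exists G : 'I_k -> 'rV[F]_k,
    (forall i j, j \in A -> G i 0 j = 0) /\ {in T &, injective G}.
Proof.
move=> cardT; pose W := pffun_on (0 : F) (~: A) predT.
have cardW : #|W| = (#|F| ^ #|~: A|)%N.
  by rewrite card_pffun_on; congr (_ ^ _)%N; apply: eq_card.
pose f i := nth [ffun=> 0] (enum W) (index i (enum T)).
have f_lt i : i \in T -> (index i (enum T) < size (enum W))%N.
  by move=> iT; rewrite -cardE cardW (leq_trans _ cardT) // cardE index_mem mem_enum.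
exists (fun i => \row_j f i j); split => [i j jA | p q pT qT /rowP fpq].
  rewrite mxE; have [/(mem_nth [ffun=> 0]) | ge] := ltnP (index i (enum T)) (size (enum W)).
    rewrite mem_enum => /pffun_onP [/subsetP fE _].
    by apply/eqP; apply: contraTT jA => fij; rewrite -in_setC; apply: fE; rewrite inE.
  by rewrite /f nth_default // ffunE.
have : f p = f q by apply/ffunP => j; move: (fpq j); rewrite !mxE.
rewrite /f => /eqP; rewrite nth_uniq ?f_lt ?enum_uniq // => /eqP.
by move/(congr1 (nth p (enum T))); rewrite !nth_index ?mem_enum.
Qed.

Section Tangents.
Variables (F : finFieldType) (k : nat) (T : {set 'I_k}) (vs : seq 'rV[F]_k).
Hypothesis vs0 : forall v, v \in vs -> v != 0.
Hypothesis vs_uniq : uniq (map (@pt_of F k) vs).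
Hypothesis vsT : forall v, v \in vs -> [disjoint supp v & T].
Hypothesis size_vs : size vs = (#|T| - 1)%N.
Local Notation M := (X_T F T :|: Y_T T vs :|: Z_T F T).

Section XPoint.
Variables (y : 'rV[F]_k) (s l0 : 'I_k) (G : 'I_k -> 'rV[F]_k).
Hypotheses (y_T : [disjoint supp y & T]) (ys : y 0 s != 0) (l0T : l0 \in T).
Hypothesis G_sT : forall i j, j \in s |: T -> G i 0 j = 0.
Hypothesis G_inj : {in T &, injective G}.

Let sT : s \notin T. Proof. by apply: contra ys => /(disjoint_supp0 y_T) ->. Qed.

Let a := (y 0 s)^-1 *: y.
Let Rg i := G i + e_ F i.
Let D := s |: (T :\ l0).
Let R i := if i == s then a else Rg i - Rg l0.
Let U := span_rows D R.

Let in_D i : i \in D -> i != s -> i \in T /\ i != l0.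
Proof. by rewrite !inE => /orP [/eqP -> | /andP [il0 iT]]; rewrite ?eqxx. Qed.

Let R_unit i j : i \in D -> j \in D -> R i 0 j = (i == j)%:R.
Proof.
move=> iD jD; rewrite /R; have [-> | si] := eqVneq i s.
  rewrite mxE; have [<- | sj] := eqVneq s j; first by rewrite mulVf.
  have [jT _] : j \in T /\ j != l0 by apply: in_D; rewrite // eq_sym.
  by rewrite (disjoint_supp0 y_T jT) mulr0.
have [iT il0] := in_D iD si.
have sl0 : (s == l0) = false by apply: contraNF sT => /eqP ->.
rewrite !mxE !eqxx /=; have [<- | sj] := eqVneq s j.
  by rewrite !G_sT ?setU11 // eq_sym (negbTE si) sl0 /= subrr.
have [jT jl0] : j \in T /\ j != l0 by apply: in_D; rewrite // eq_sym.
by rewrite !G_sT ?inE ?jT ?orbT // eq_sym (negbTE jl0) /= !add0r subr0 eq_sym.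
Qed.

Let card_D : #|D| = #|T|.
Proof.
rewrite cardsU1 [in RHS](cardsD1 l0 T) l0T !inE.
by rewrite negb_and sT orbT.
Qed.

Let span_decomp w : (w <= U)%MS ->
  w = w 0 s *: a + \sum_(i in T) w 0 i *: Rg i /\ \sum_(i in T) w 0 i = 0.
Proof.
move=> /(span_rowsP R_unit); rewrite big_setU1 /=; last by rewrite !inE negb_and sT orbT.
rewrite {1}/R eqxx (eq_bigr (fun i => w 0 i *: Rg i - w 0 i *: Rg l0)); last first.
  move=> i; rewrite !inE => /andP [_ iT]; rewrite /R ifN ?scalerBr //.
  by apply: contraNneq sT => <-.
rewrite sumrB -scaler_suml => wE.
have wl0 : w 0 l0 = - \sum_(i in T :\ l0) w 0 i.
  have := congr1 (fun v : 'rV[F]_k => v 0 l0) wE; rewrite /= !mxE summxE.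
  rewrite big1 => [|i]; last first.
    rewrite !inE => /andP [il0 iT]; rewrite !mxE G_sT ?inE ?l0T ?orbT // eqxx.
    by rewrite eq_sym (negbTE il0) /= addr0 mulr0.
  rewrite (disjoint_supp0 y_T l0T) G_sT ?inE ?l0T ?orbT // eqxx /=.
  by rewrite eqxx /= !mulr0 !add0r mulr1n mulr1.
split; last by rewrite (big_setD1 l0) //=; apply/eqP; rewrite addr_eq0; apply/eqP.
rewrite [in RHS](big_setD1 l0) //= {1}wE; congr (_ + _); rewrite addrC -scaleNr.
by congr (_ + _ *: _); apply/esym; exact: wl0.
Qed.

Lemma tangent_X_point :
  exists U : 'M[F]_k, \rank U = #|T| /\ pts_in U :&: M = [set pt_of y].
Proof.
have y0 : y != 0 by apply: contra_neq ys => ->; rewrite mxE.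
exists U; split; first by rewrite rank_span_rows // card_D.
apply: tangent_of_point => //.
- have := scalemx_sub (y 0 s) (span_rows_sub R (setU11 s (T :\ l0))).
  by rewrite /R eqxx /a scalerA mulfV // scale1r.
- by rewrite !in_setU mem_X_T // y_T.
move=> w w0 /span_decomp [wE sum0]; rewrite !in_setU => /orP [/orP [wX|wY]|wZ].
- rewrite mem_X_T // -setI_eq0 in wX.
  rewrite sum_supp (eqP wX) big_set0 addr0 in wE.
  have ws : w 0 s != 0 by apply: contra_neq w0 => ws; rewrite wE ws scale0r.
  by rewrite wE /a scalerA pt_ofZ // mulf_neq0 ?invr_eq0.
- rewrite mem_Y_T // in wY; case/andP: wY => /cards1P [t st] _.
  have : t \in supp w :&: T by rewrite st set11.
  rewrite inE => /andP [/suppN0 wt0 _].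
  move: sum0; rewrite (big_supp (w := w)) => [|i ->] //.
  by rewrite st big_set1 => /eqP; rewrite (negbTE wt0).
- rewrite mem_Z_T // in wZ; case/andP: wZ => sT' /cards2P [p [q [pq sw]]].
  have [pT qT] : p \in T /\ q \in T by rewrite !(subsetP sT') // sw !inE eqxx ?orbT.
  have wq0 : w 0 q != 0 by apply: suppN0; rewrite sw !inE eqxx orbT.
  have ws : w 0 s = 0 by apply: supp0; apply: contra sT => /(subsetP sT').
  rewrite ws scale0r add0r in wE.
  move: sum0; rewrite (big_supp (w := w)) => [|i ->] //; rewrite (setIidPl sT') sw.
  rewrite big_setU1 ?big_set1 ?inE //= => /eqP; rewrite addr_eq0 => /eqP wq.
  have := graph_exp_pair wE pq sT' sw; rewrite wq scaleNr addrC -scalerBr => /eqP.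
  rewrite scaler_eq0 (negbTE wq0) subr_eq0 /= => /eqP /G_inj Gpq.
  by rewrite Gpq ?eqxx in pq.
Qed.

End XPoint.

(* This is where [m <= q ^ (k - m - 1)] is used: the [m] vectors [G i] must be distinct
   and vanish on the [m + 1] coordinates [s |: T]. *)
Lemma tangent_X x : (0 < #|T|)%N -> (#|T| <= #|F| ^ (k - #|T| - 1))%N -> x \in X_T F T ->
  exists U : 'M[F]_k, \rank U = #|T| /\ pts_in U :&: M = [set x].
Proof.
move=> T_gt0 cardT /imsetP [y /andP [/rV0Pn [s ys] y_T] ->].
have [l0 l0T] : exists l0, l0 \in T by apply/set0Pn; rewrite -card_gt0.
have sT : s \notin T by apply: contra ys => /(disjoint_supp0 y_T) ->.
have cardE : #|~: (s |: T)| = (k - #|T| - 1)%N.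
  by rewrite cardsCs setCK cardsU1 sT card_ord addnC subnDA.
have [|G [G_sT G_inj]] := @exists_inj_rows F k T (s |: T); first by rewrite cardE.
exact: tangent_X_point y_T ys l0T G_sT G_inj.
Qed.

Section YPoint.
Variables (y : 'rV[F]_k) (j0 : 'I_k).
Hypotheses (y0 : y != 0) (supp_yT : supp y :&: T = [set j0]).
Hypothesis y_not_excluded : ~~ excluded T vs (pt_of y).

Let j0_supp_T : j0 \in supp y :&: T. Proof. by rewrite supp_yT set11. Qed.
Let j0T : j0 \in T. Proof. by move: j0_supp_T; rewrite inE => /andP []. Qed.
Let yj0 : y 0 j0 != 0. Proof. by move: j0_supp_T; rewrite inE => /andP [/suppN0]. Qed.

Let S := T :\ j0.
Let card_S : #|S| = size vs. Proof. by rewrite size_vs (cardsD1 j0 T) j0T addKn. Qed.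

(* The rows are [y / y_j0] for [j0] and [v + e_i] for [i != j0], [v] running through [vs]. *)
Let G i := if i == j0 then (y 0 j0)^-1 *: y - e_ F j0 else vs_at vs S i.
Let U := graph_span T G.

Let G_T i j : i \in T -> j \in T -> G i 0 j = 0.
Proof.
move=> iT jT; rewrite /G; case: eqP => [_|ij0].
  rewrite !mxE eqxx /=; have [->|jj0] := eqVneq j j0; first by rewrite mulVf // subrr.
  rewrite [y 0 j]supp0 ?mulr0 ?subrr //; apply: contra jj0 => js.
  by rewrite -in_set1 -supp_yT inE js jT.
apply: (disjoint_supp0 _ jT); apply/vsT/vs_at_mem => //.
by rewrite !inE iT andbT; apply/eqP.
Qed.

Let G_j0 : G j0 + e_ F j0 = (y 0 j0)^-1 *: y.
Proof. by rewrite /G eqxx subrK. Qed.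

Let G_vs i : i \in T -> i != j0 -> G i = 1 *: vs_at vs S i /\ vs_at vs S i \in vs.
Proof.
move=> iT ij0; rewrite /G (negbTE ij0) scale1r; split => //.
by apply: vs_at_mem; rewrite // !inE ij0.
Qed.

Let no_Z_pair (w : 'rV[F]_k) a b : w = \sum_(i in T) w 0 i *: (G i + e_ F i) ->
  supp w \subset T -> supp w = [set a; b] -> a != b -> b != j0 -> False.
Proof.
move=> w_exp sT sw ab bj0.
have [aT bT] : a \in T /\ b \in T by rewrite !(subsetP sT) // sw !inE eqxx ?orbT.
have [wa0 wb0] : w 0 a != 0 /\ w 0 b != 0 by rewrite !suppN0 // sw !inE eqxx ?orbT.
have [Gb vb] := G_vs bT bj0.
have [aj0|aj0] := eqVneq a j0; last first.
  have [Ga va] := G_vs aT aj0.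
  apply: (graph_exp_indep vs0 vs_uniq w_exp ab sT sw Ga Gb); rewrite ?oner_neq0 //.
  by rewrite (inj_in_eq (vs_at_inj vs_uniq card_S)) // !inE ?aj0 ?bj0.
subst a; have := graph_exp_pair w_exp ab sT sw; rewrite Gb scale1r.
move/(lincomb_eq0 wa0); set d := - _ => Gd.
have d0 : d != 0 by rewrite oppr_eq0 mulf_neq0 ?invr_eq0.
move/negP: y_not_excluded; apply.
by rewrite -(pt_ofZ y (invr_neq0 yj0)) -G_j0 Gd excluded_scale_e.
Qed.

Lemma tangent_Y_point :
  exists U : 'M[F]_k, \rank U = #|T| /\ pts_in U :&: M = [set pt_of y].
Proof.
exists U; split; first exact: rank_graph_span G_T.
have yU : (y <= U)%MS.
  have := scalemx_sub (y 0 j0) (graph_span_sub G j0T).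
  by rewrite G_j0 scalerA mulfV // scale1r.
apply: tangent_of_point => //.
  by rewrite !in_setU mem_Y_T // supp_yT cards1 y_not_excluded orbT.
move=> w w0 /(graph_spanP G_T) w_exp; rewrite !in_setU => /orP [/orP [wX|wY]|wZ].
- by rewrite mem_X_T // in wX; have := graph_exp_meet w_exp w0; rewrite wX.
- rewrite mem_Y_T // in wY; case/andP: wY => /cards1P [t st] w_ne.
  have : t \in supp w :&: T by rewrite st set11.
  rewrite inE => /andP [/suppN0 wt0 tT].
  have [tj0|tj0] := eqVneq t j0; last first.
    have [Gt vt] := G_vs tT tj0.
    by rewrite (graph_exp_excluded w_exp st Gt) ?oner_neq0 in w_ne.
  subst t; rewrite (graph_exp_single w_exp st) G_j0 scalerA pt_ofZ //.
  by rewrite mulf_neq0 ?invr_eq0.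
- rewrite mem_Z_T // in wZ; case/andP: wZ => sT /cards2P [p [q [pq sw]]].
  have [qj0|qj0] := eqVneq q j0; last by case: (no_Z_pair w_exp sT sw pq qj0).
  have qp : q != p by rewrite eq_sym.
  by case: (no_Z_pair w_exp sT (etrans sw (setUC _ _)) qp); rewrite -qj0 eq_sym.
Qed.

End YPoint.

Lemma tangent_Y x : x \in Y_T T vs ->
  exists U : 'M[F]_k, \rank U = #|T| /\ pts_in U :&: M = [set x].
Proof.
move=> xY; case/setDP: (xY) => /imsetP [y /andP [y0 /cards1P [j0 sy]] xy] _.
move: xY; rewrite xy mem_Y_T // sy cards1 /= => y_ne.
exact: tangent_Y_point y0 sy y_ne.
Qed.

Section ZPoint.
Variables (y : 'rV[F]_k) (p0 q0 : 'I_k).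
Hypotheses (p0q0 : p0 != q0) (supp_y : supp y = [set p0; q0]) (supp_yT : supp y \subset T).

Let p0T : p0 \in T. Proof. by rewrite (subsetP supp_yT) // supp_y !inE eqxx. Qed.
Let q0T : q0 \in T. Proof. by rewrite (subsetP supp_yT) // supp_y !inE eqxx orbT. Qed.
Let yp0 : y 0 p0 != 0. Proof. by rewrite suppN0 // supp_y !inE eqxx. Qed.
Let yq0 : y 0 q0 != 0. Proof. by rewrite suppN0 // supp_y !inE eqxx orbT. Qed.

Let S := T :\ q0.
Let card_S : #|S| = size vs. Proof. by rewrite size_vs (cardsD1 q0 T) q0T addKn. Qed.

(* [p0] and [q0] share the vector [v0 := vs_at S p0], with coefficients chosen so that
   [y] lies in the span of the rows. *)
Let sel i := if i == q0 then p0 else i.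
Let coef i := if i == p0 then y 0 q0 else if i == q0 then - y 0 p0 else 1.
Let G i := coef i *: vs_at vs S (sel i).
Let U := graph_span T G.

Let sel_S i : i \in T -> sel i \in S.
Proof.
by move=> iT; rewrite /sel !inE; case: (eqVneq i q0) => [_|->]; rewrite ?p0q0 ?p0T ?iT.
Qed.

Let G_vs i : i \in T -> [/\ G i = coef i *: vs_at vs S (sel i), coef i != 0
  & vs_at vs S (sel i) \in vs].
Proof.
move=> iT; split => //; last exact/vs_at_mem/sel_S.
by rewrite /coef; case: ifP => _; [|case: ifP => _]; rewrite ?oppr_eq0 ?oner_eq0.
Qed.

Let G_T i j : i \in T -> j \in T -> G i 0 j = 0.
Proof. by move=> iT jT; have [-> _ /vsT/disjoint_supp0 v0] := G_vs iT; rewrite mxE v0 ?mulr0. Qed.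

Let sel_collision p q : p != q -> p \in T -> q \in T -> sel p = sel q ->
  [set p; q] = [set p0; q0].
Proof.
move=> pq pT qT; rewrite /sel.
case: (eqVneq p q0) => [pq0|_]; case: (eqVneq q q0) => [qq0|_].
- by rewrite pq0 qq0 eqxx in pq.
- by move=> qp0; rewrite pq0 -qp0 setUC.
- by move=> pp0; rewrite qq0 pp0.
- by move=> pq'; rewrite pq' eqxx in pq.
Qed.

Let v0 := vs_at vs S p0.
Let G_p0 : G p0 = y 0 q0 *: v0.
Proof. by rewrite /G /coef /sel eqxx (negbTE p0q0). Qed.
Let G_q0 : G q0 = - y 0 p0 *: v0.
Proof. by rewrite /G /coef /sel eqxx eq_sym (negbTE p0q0). Qed.

Let y_in_U : (y <= U)%MS.
Proof.
have -> : y = y 0 p0 *: (G p0 + e_ F p0) + y 0 q0 *: (G q0 + e_ F q0).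
  by rewrite {1}(supp_pair p0q0 supp_y) G_p0 G_q0; apply/rowP => j; rewrite !mxE; ring.
by rewrite addmx_sub // scalemx_sub // graph_span_sub.
Qed.

Let Z_point_eq (w : 'rV[F]_k) : w = \sum_(i in T) w 0 i *: (G i + e_ F i) ->
  supp w \subset T -> (#|supp w| == 2)%N -> pt_of w = pt_of y.
Proof.
move=> w_exp sT /cards2P [p [q [pq sw]]].
have [pT qT] : p \in T /\ q \in T by rewrite !(subsetP sT) // sw !inE eqxx ?orbT.
have [Gp cp vp] := G_vs pT; have [Gq cq vq] := G_vs qT.
have [vv|vv] := eqVneq (vs_at vs S (sel p)) (vs_at vs S (sel q)); last first.
  by case: (graph_exp_indep vs0 vs_uniq w_exp pq sT sw Gp Gq).
have {}sw : supp w = [set p0; q0].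
  by rewrite sw; apply: sel_collision => //; apply: (vs_at_inj vs_uniq card_S); rewrite ?sel_S.
have := graph_exp_pair w_exp p0q0 sT sw.
have v0_neq0 : v0 != 0 by apply/vs0/vs_at_mem; rewrite // !inE p0q0.
rewrite G_p0 G_q0 !scalerA -scalerDl => /eqP; rewrite scaler_eq0 (negbTE v0_neq0) orbF.
by rewrite mulrN subr_eq0 => /eqP /(pt_of_pair_eq p0q0 sw supp_y).
Qed.

Lemma tangent_Z_point :
  exists U : 'M[F]_k, \rank U = #|T| /\ pts_in U :&: M = [set pt_of y].
Proof.
have y0 : y != 0 by apply: contra_neq yp0 => ->; rewrite mxE.
exists U; split; first exact: rank_graph_span G_T.
apply: (tangent_of_point y0 y_in_U).
  by rewrite !in_setU mem_Z_T // supp_yT supp_y cards2 p0q0 orbT.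
move=> w w0 /(graph_spanP G_T) w_exp; rewrite !in_setU => /orP [/orP [wX|wY]|wZ].
- by rewrite mem_X_T // in wX; have := graph_exp_meet w_exp w0; rewrite wX.
- rewrite mem_Y_T // in wY; case/andP: wY => /cards1P [t st].
  have : t \in supp w :&: T by rewrite st set11.
  rewrite inE => /andP [_ /G_vs [Gt ct vt]].
  by rewrite (graph_exp_excluded w_exp st Gt).
- by rewrite mem_Z_T // in wZ; case/andP: wZ; apply: Z_point_eq.
Qed.

End ZPoint.

Lemma tangent_Z x : x \in Z_T F T ->
  exists U : 'M[F]_k, \rank U = #|T| /\ pts_in U :&: M = [set x].
Proof.
case/imsetP=> y /andP [/andP [_ syT] /cards2P [p0 [q0 [p0q0 sy]]]] ->.
exact: tangent_Z_point p0q0 sy syT.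
Qed.

End Tangents.

Theorem mainTheorem17 (F : finFieldType) (k m : nat) (T : {set 'I_k})
  (vs : seq 'rV[F]_k) :
  (1 <= m)%N -> (m <= k - 1)%N -> #|T| = m ->
  size vs = (m - 1)%N ->
  (forall v, v \in vs -> v != 0) ->
  uniq (map (@pt_of F k) vs) ->
  (forall v, v \in vs -> [disjoint supp v & T]) ->
  (m <= #|F| ^ (k - m - 1))%N ->
  is_minimal_block (k - m) (X_T F T :|: Y_T T vs :|: Z_T F T).
Proof.
move=> m_gt0 m_le cardT size_vs vs0 vs_uniq vsT cardF; subst m.
have rkT : (k - (k - #|T|))%N = #|T|.
  by rewrite subKn // (leq_trans m_le) ?leq_subr.
rewrite /is_minimal_block /is_block /is_tangent rkT; split; [|split].
- exact: XYZ_sub_PG.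
- by move=> U rU; apply: block_XYZ; rewrite // size_vs subn1 ltn_predL.
move=> x; rewrite !in_setU => /orP [/orP [xX|xY]|xZ].
- exact: tangent_X m_gt0 cardF xX.
- by case: (tangent_Y vs0 vs_uniq vsT size_vs xY) => U ?; exists U.
- by case: (tangent_Z vs0 vs_uniq vsT size_vs xZ) => U ?; exists U.
Qed.
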